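(* Let $\kappa\in\{-1,0,1\}$ and let $\mathbb{M}^3(\kappa)$ be represented as $\mathbb{R}^3$ (for $\kappa=0$), $\{x_3>0\}$ (for $\kappa=-1$) or $\mathbb{R}^3$ identified with $\mathbb{S}^3$ minus a point (for $\kappa=1$), with metric $g_\kappa=\eta_\kappa(x)(dx_1^2+dx_2^2+dx_3^2)$, where $\eta_{-1}=1/x_3^2$, $\eta_0=1$, $\eta_1=4/(1+x_1^2+x_2^2+x_3^2)^2$. Let $E$ be the end of revolution $f(s,\theta)=(\gamma_1(s)\cos\theta,\gamma_1(s)\sin\theta,\gamma_2(s))$, $s\in[0,\infty)$, $\theta\in[0,2\pi]$, where $\gamma(s)=(\gamma_1(s),0,\gamma_2(s))$ is a regular curve parametrized by arc length with respect to $g_\kappa$ and $\gamma_1>0$. Define $w_{-1}=\gamma_1/\gamma_2$, $w_0=\gamma_1$, $w_1=\frac{2\gamma_1}{1+\gamma_1^2+\gamma_2^2}$. If $\int^\infty\frac{t\,dt}{\int_0^t w_\kappa(s)\,ds}=\infty$, then $E$ is parabolic.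
   Context: $E$ carries the metric induced by the immersion $f$, which equals $ds^2+w_\kappa(s)^2d\theta^2$. An end is parabolic if every bounded harmonic function on it is determined by its boundary values. *)

From Stdlib Require Import Reals ZArith.
From Coquelicot Require Import Coquelicot.
Open Scope R_scope.

Definition eta (k : Z) (x1 x2 x3 : R) : R :=
  if Z.eqb k (-1) then 1 / x3 ^ 2
  else if Z.eqb k 0 then 1
  else 4 / (1 + x1 ^ 2 + x2 ^ 2 + x3 ^ 2) ^ 2.

Definition wk (k : Z) (g1 g2 : R -> R) (s : R) : R :=
  if Z.eqb k (-1) then g1 s / g2 s
  else if Z.eqb k 0 then g1 s
  else 2 * g1 s / (1 + g1 s ^ 2 + g2 s ^ 2).

Definition profile_curve (k : Z) (g1 g2 : R -> R) : Prop :=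
  (forall n x, ex_derive_n g1 n x) /\ (forall n x, ex_derive_n g2 n x) /\
  (forall s, 0 <= s -> 0 < g1 s) /\
  (Z.eqb k (-1) = true -> forall s, 0 <= s -> 0 < g2 s) /\
  (forall s, 0 <= s ->
     eta k (g1 s) 0 (g2 s) * ((Derive g1 s) ^ 2 + (Derive g2 s) ^ 2) = 1).

Definition D1 (u : R -> R -> R) : R -> R -> R :=
  fun s th => Derive (fun x => u x th) s.
Definition D2 (u : R -> R -> R) : R -> R -> R :=
  fun s th => Derive (fun y => u s y) th.

Definition jcont (u : R -> R -> R) (s th : R) : Prop :=
  continuous (fun p : R * R => u (fst p) (snd p)) (s, th).

Definition C2_at (u : R -> R -> R) (s th : R) : Prop :=
  (forall v, v = u \/ v = D1 u \/ v = D2 u ->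
     ex_derive (fun x => v x th) s /\ ex_derive (fun y => v s y) th) /\
  jcont u s th /\ jcont (D1 u) s th /\ jcont (D2 u) s th /\
  jcont (D1 (D1 u)) s th /\ jcont (D2 (D1 u)) s th /\
  jcont (D1 (D2 u)) s th /\ jcont (D2 (D2 u)) s th.

(* Laplace–Beltrami operator of the metric ds^2 + w(s)^2 dtheta^2. *)
Definition lap (w : R -> R) (u : R -> R -> R) (s th : R) : R :=
  (1 / w s) * Derive (fun x => w x * D1 u x th) s + D2 (D2 u) s th / (w s) ^ 2.

Definition bdd_harmonic_on_E (w : R -> R) (u : R -> R -> R) : Prop :=
  (forall s th, 0 <= s -> u s (th + 2 * PI) = u s th) /\
  (exists M, forall s th, 0 <= s -> Rabs (u s th) <= M) /\
  (forall s th, 0 <= s ->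
     filterlim (fun p : R * R => u (fst p) (snd p))
       (within (fun p : R * R => 0 <= fst p) (locally (s, th)))
       (locally (u s th))) /\
  (forall s th, 0 < s -> C2_at u s th /\ lap w u s th = 0).

Definition parabolic_end (w : R -> R) : Prop :=
  forall u v, bdd_harmonic_on_E w u -> bdd_harmonic_on_E w v ->
    (forall th, u 0 th = v 0 th) ->
    forall s th, 0 <= s -> u s th = v s th.

(* Let h be the difference of two bounded harmonic functions with the same
   boundary values, E(s) = RInt h(s,.)^2 over the circle (the energy) and
   F = E' (the flux).  By the equation and periodicity in theta,
   (w F)' = 2 RInt (w h_s^2 + h_theta^2 / w) >= 0.  If F(s1) > 0, then
   F >= c / w beyond s1, so E grows like c RInt (1/w), which is unbounded:
   by Cauchy-Schwarz on [t/2, t], t / RInt_0^t w <= (4/t) RInt_{t/2}^t (1/w),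
   and the divergence of RInt t / RInt_0^t w forces that of RInt 1/w.  Thus
   F <= 0, E is nonincreasing, and E(0+) = 0 by continuity at the boundary;
   so E = 0 and h = 0. *)

From Stdlib Require Import Reals ZArith Lra Lia.
From Coquelicot Require Import Coquelicot.
Open Scope R_scope.

Ltac auto_continuous :=
  repeat match goal with
  | H : continuous ?f ?x |- continuous ?f ?x => exact H
  | |- continuous (fun z => @?f z + @?g z) _ => apply (continuous_plus f g)
  | |- continuous (fun z => @?f z - @?g z) _ => apply (continuous_minus f g)
  | |- continuous (fun z => @?f z * @?g z) _ => apply (continuous_mult f g)
  | |- continuous (fun z => @?f z / ?c) _ => apply (continuous_mult f (fun _ => / c))
  | |- continuous (fun _ => ?c) _ => apply continuous_const
  end.

Lemma continuity_2d_pt_slice (f : R -> R -> R) x y :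
  continuity_2d_pt f x y -> continuous (fun v => f x v) y.
Proof.
  intros H. apply continuity_pt_filterlim. intros eps Heps.
  destruct (H (mkposreal eps Heps)) as [d Hd].
  exists d. split; [apply cond_pos|]. intros z [_ Hz]. apply Hd; [|exact Hz].
  rewrite Rminus_eq_0, Rabs_R0. apply cond_pos.
Qed.

Lemma locally_gt0 x : 0 < x -> locally x (fun y => 0 < y).
Proof.
  intros Hx. exists (mkposreal x Hx). intros y Hy.
  apply Rabs_lt_between' in Hy. simpl in Hy. lra.
Qed.

Lemma ex_RInt_continuous_ge (f : R -> R) c a b :
  c <= a -> c <= b -> (forall s, c <= s -> continuous f s) -> ex_RInt f a b.
Proof.
  intros Ha Hb Hf. apply (@ex_RInt_continuous R_CompleteNormedModule).
  intros z Hz. apply Hf. pose proof (Rmin_glb _ _ _ Ha Hb). lra.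
Qed.

Lemma ex_RInt_continuous_pos (f : R -> R) a b :
  0 < a -> 0 < b -> (forall s, 0 < s -> continuous f s) -> ex_RInt f a b.
Proof.
  intros Ha Hb Hf. apply (ex_RInt_continuous_ge f (Rmin a b)); [apply Rmin_l|apply Rmin_r|].
  intros s Hs. apply Hf. pose proof (Rmin_glb_lt a b 0 Ha Hb). lra.
Qed.

Lemma ex_RInt_slice (f : R -> R) : (forall y, continuous f y) -> ex_RInt f 0 (2 * PI).
Proof. intros Hf. apply (@ex_RInt_continuous R_CompleteNormedModule). auto. Qed.

Lemma continuous_comp_half (f : R -> R) t :
  continuous f (t / 2) -> continuous (fun x => f (x / 2)) t.
Proof.
  intros Hf. apply (continuous_comp (fun x => x / 2) f); [|exact Hf].
  apply (continuous_mult (fun x => x) (fun _ => / 2)); [apply continuous_id|apply continuous_const].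
Qed.

Lemma RInt_Rmult_l (f : R -> R) a b c : ex_RInt f a b ->
  RInt (fun t => c * f t) a b = c * RInt f a b.
Proof. exact (RInt_scal f a b c). Qed.

Lemma is_derive_RInt_param_pos (f df : R -> R -> R) a b x : 0 < x ->
  (forall u t, 0 < u -> is_derive (fun z => f z t) u (df u t)) ->
  (forall u t, 0 < u -> continuity_2d_pt df u t) ->
  (forall u t, 0 < u -> continuity_2d_pt f u t) ->
  is_derive (fun z => RInt (fun t => f z t) a b) x (RInt (fun t => df x t) a b).
Proof.
  intros Hx Hd Hdc Hfc.
  rewrite (RInt_ext _ (fun t => Derive (fun u => f u t) x)).
  2: { intros t _. symmetry. apply is_derive_unique, Hd, Hx. }
  apply (is_derive_RInt_param f).
  - apply (filter_imp (fun y => 0 < y)); [|exact (locally_gt0 x Hx)].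
    intros y Hy t _. eexists. apply Hd, Hy.
  - intros t _. apply (continuity_2d_pt_ext_loc df); [|exact (Hdc x t Hx)].
    exists (mkposreal x Hx). intros u v Hu _.
    apply Rabs_lt_between' in Hu. simpl in Hu.
    symmetry. apply is_derive_unique, Hd. lra.
  - apply (filter_imp (fun y => 0 < y)); [|exact (locally_gt0 x Hx)].
    intros y Hy. apply (@ex_RInt_continuous R_CompleteNormedModule).
    intros z _. apply continuity_2d_pt_slice, Hfc, Hy.
Qed.

Lemma nondecreasing_of_derive_nonneg (f df : R -> R) x y : x <= y ->
  (forall z, x <= z <= y -> is_derive f z (df z)) ->
  (forall z, x <= z <= y -> 0 <= df z) -> f x <= f y.
Proof.
  intros Hxy Hd Hp.
  destruct (MVT_gen f x y df) as [c [Hc Heq]];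
    rewrite Rmin_left, Rmax_right in * by exact Hxy.
  - intros z Hz. apply Hd. lra.
  - intros z Hz. apply continuity_pt_filterlim, (ex_derive_continuous f).
    eexists. apply Hd, Hz.
  - assert (0 <= df c * (y - x)) by (apply Rmult_le_pos; [apply Hp, Hc|lra]). lra.
Qed.

Lemma RInt_eq0_continuous_nonneg (g : R -> R) a b t : a < b -> a <= t <= b ->
  (forall x, continuous g x) -> (forall x, 0 <= g x) -> RInt g a b = 0 -> g t = 0.
Proof.
  intros Hab Ht Hc Hp HI.
  destruct (Rle_lt_or_eq_dec _ _ (Hp t)) as [Hgt|]; [exfalso|auto].
  destruct (Hc t (fun y => g t / 2 < y)) as [d Hd].
  { exists (mkposreal (g t / 2) ltac:(lra)). intros y Hy.
    apply Rabs_lt_between' in Hy. simpl in Hy. lra. }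
  set (a' := Rmax a (t - d / 2)). set (b' := Rmin b (t + d / 2)).
  pose proof (cond_pos d).
  assert (Ha' : a <= a' <= t) by (split; [apply Rmax_l|apply Rmax_lub; lra]).
  assert (Hb' : t <= b' <= b) by (split; [apply Rmin_glb; lra|apply Rmin_l]).
  assert (Hab' : a' < b').
  { apply Rmax_lub_lt; apply Rmin_glb_lt; lra. }
  assert (Hex : forall u v, ex_RInt g u v)
    by (intros; apply (@ex_RInt_continuous R_CompleteNormedModule); auto).
  assert (0 <= RInt g a a') by (apply RInt_ge_0; auto; lra).
  assert (0 <= RInt g b' b) by (apply RInt_ge_0; auto; lra).
  assert (0 < RInt g a' b').
  { apply RInt_gt_0; auto. intros x Hx. apply Rlt_trans with (g t / 2); [lra|].
    assert (t - d / 2 <= a') by apply Rmax_r.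
    assert (b' <= t + d / 2) by apply Rmin_r.
    apply Hd, Rabs_lt_between'. lra. }
  rewrite <- (RInt_Chasles g a b' b), <- (RInt_Chasles g a a' b') in HI by auto.
  unfold plus in HI; simpl in HI. lra.
Qed.

Lemma periodic_nat (f : R -> R) p : (forall t, f (t + p) = f t) ->
  forall n x, f (x + p * INR n) = f x.
Proof.
  intros Hp n. induction n as [|n IH]; intro x.
  - simpl. f_equal. ring.
  - rewrite S_INR. replace (x + p * (INR n + 1)) with (x + p * INR n + p) by ring.
    rewrite Hp. apply IH.
Qed.

Lemma periodic_Z (f : R -> R) p : (forall t, f (t + p) = f t) ->
  forall z x, f (x + p * IZR z) = f x.
Proof.
  intros Hp z x. destruct (Z.le_ge_cases 0 z) as [Hz|Hz].
  - rewrite <- (Z2Nat.id z Hz), <- INR_IZR_INZ. apply periodic_nat, Hp.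
  - rewrite <- (periodic_nat f p Hp (Z.to_nat (- z)) (x + p * IZR z)).
    rewrite INR_IZR_INZ, Z2Nat.id, opp_IZR by lia. f_equal. ring.
Qed.

Lemma periodic_eq0 (f : R -> R) p : 0 < p -> (forall t, f (t + p) = f t) ->
  (forall t, 0 <= t <= p -> f t = 0) -> forall t, f t = 0.
Proof.
  intros Hp Hper H0 t.
  destruct (archimed (t / p)) as [Hup1 Hup2].
  set (m := (up (t / p) - 1)%Z).
  assert (Hm : IZR m <= t / p < IZR m + 1) by (unfold m; rewrite minus_IZR; lra).
  assert (Hr : 0 <= t - p * IZR m <= p).
  { destruct Hm as [Hm1 Hm2].
    apply (Rmult_le_compat_l p) in Hm1; [|lra].
    apply (Rmult_lt_compat_l p) in Hm2; [|lra].
    replace (p * (t / p)) with t in Hm1, Hm2 by (field; lra). lra. }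
  rewrite <- (H0 _ Hr), <- (periodic_Z f p Hper m (t - p * IZR m)).
  f_equal. ring.
Qed.

Lemma is_derive_periodic (f : R -> R) p x d : (forall t, f (t + p) = f t) ->
  is_derive f (x + p) d -> is_derive f x d.
Proof.
  intros Hp Hd. apply (is_derive_ext (fun y => f (y + p))); [exact Hp|].
  replace d with (scal 1 d) by apply (scal_one (K:=R_AbsRing)).
  apply (is_derive_comp f (fun y => y + p)); [exact Hd|].
  auto_derive; auto; ring.
Qed.

Lemma is_derive_RInt_upper (f : R -> R) c a t :
  (forall s, c <= s -> continuous f s) -> c <= a -> c < t ->
  is_derive (fun b => RInt f a b) t (f t).
Proof.
  intros Hf Ha Ht. apply (is_derive_RInt f _ a t); [|apply Hf; lra].
  exists (mkposreal (t - c) ltac:(lra)). intros y Hy.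
  apply Rabs_lt_between' in Hy. simpl in Hy.
  apply (@RInt_correct R_CompleteNormedModule), (ex_RInt_continuous_ge f c); auto; lra.
Qed.

Lemma continuous_RInt_upper (f : R -> R) c a t :
  (forall s, c <= s -> continuous f s) -> c <= a -> c < t ->
  continuous (fun b => RInt f a b) t.
Proof.
  intros Hf Ha Ht. apply (ex_derive_continuous (fun b => RInt f a b)).
  eexists. apply (is_derive_RInt_upper f c); assumption.
Qed.

(* Integrating the AM-GM inequality [2 <= l w + 1 / (l w)] with the optimal
   weight [l = (b - a)^-1 * RInt (/ w) a b]. *)
Lemma RInt_sqr_le_RInt_mul_RInt_inv (w : R -> R) a b : a < b ->
  (forall s, a <= s <= b -> continuous w s) -> (forall s, a <= s <= b -> 0 < w s) ->
  (b - a) ^ 2 <= RInt w a b * RInt (fun x => / w x) a b.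
Proof.
  intros Hab Hc Hp.
  assert (Hci : forall s, a <= s <= b -> continuous (fun x => / w x) s).
  { intros s Hs. apply (continuous_Rinv_comp w); [apply Hc, Hs|].
    specialize (Hp s Hs). lra. }
  assert (Hex : forall f : R -> R, (forall s, a <= s <= b -> continuous f s) -> ex_RInt f a b).
  { intros f Hf. apply (@ex_RInt_continuous R_CompleteNormedModule).
    intros z Hz. rewrite Rmin_left, Rmax_right in Hz by lra. auto. }
  set (I := RInt (fun x => / w x) a b). set (W := RInt w a b). set (L := b - a).
  assert (HI : 0 < I).
  { apply RInt_gt_0; auto. intros x Hx. apply Rinv_0_lt_compat, Hp. lra. }
  set (l := I / L).
  assert (Hl : 0 < l) by (apply Rdiv_lt_0_compat; unfold L; lra).
  assert (Hint : RInt (fun _ => 2) a b <= RInt (fun x => l * w x + / l * / w x) a b).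
  { apply RInt_le; [lra|apply ex_RInt_const| |].
    - apply Hex. intros s Hs. pose proof (Hc s Hs). pose proof (Hci s Hs). auto_continuous.
    - intros x Hx. assert (Hlw : 0 < l * w x) by (apply Rmult_lt_0_compat; auto; apply Hp; lra).
      rewrite <- Rinv_mult. apply (Rmult_le_reg_l (l * w x)); [exact Hlw|].
      rewrite Rmult_plus_distr_l, Rinv_r by lra.
      pose proof (pow2_ge_0 (l * w x - 1)). nra. }
  rewrite RInt_const, (RInt_plus (fun x => l * w x) (fun x => / l * / w x)) in Hint.
  2: { apply Hex. intros s Hs. pose proof (Hc s Hs). auto_continuous. }
  2: { apply Hex. intros s Hs. pose proof (Hci s Hs). auto_continuous. }
  rewrite (RInt_Rmult_l w a b l), (RInt_Rmult_l (fun x => / w x) a b (/ l)) in Hint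
    by (apply Hex; auto).
  fold I W L in Hint. unfold scal, plus in Hint; simpl in Hint. unfold mult in Hint; simpl in Hint.
  unfold l in Hint. replace (/ (I / L) * I) with L in Hint by (field; unfold L; lra).
  apply (Rmult_le_reg_r (/ L)); [apply Rinv_0_lt_compat; unfold L; lra|].
  replace (L ^ 2 * / L) with L by (field; unfold L; lra).
  replace (W * I * / L) with (I / L * W) by (field; unfold L; lra). lra.
Qed.

Lemma RInt_comp_half (f : R -> R) a b : 0 < a -> 0 < b ->
  (forall s, 0 < s -> continuous f s) ->
  RInt (fun t => f (t / 2)) a b = 2 * RInt f (a / 2) (b / 2).
Proof.
  intros Ha Hb Hc.
  assert (Hex : ex_RInt f (1 / 2 * a + 0) (1 / 2 * b + 0))
    by (apply ex_RInt_continuous_pos; auto; lra).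
  pose proof (RInt_comp_lin f (1 / 2) 0 a b Hex) as Hlin.
  replace (1 / 2 * a + 0) with (a / 2) in Hlin by field.
  replace (1 / 2 * b + 0) with (b / 2) in Hlin by field.
  rewrite <- Hlin, <- RInt_Rmult_l by exact (ex_RInt_comp_lin f (1 / 2) 0 a b Hex).
  apply RInt_ext. intros x _. unfold scal; simpl; unfold mult; simpl.
  replace (1 / 2 * x + 0) with (x / 2) by field. field.
Qed.

Lemma RInt_sub_half_telescope (f : R -> R) a b : 0 < a -> 0 < b ->
  (forall s, 0 < s -> continuous f s) ->
  RInt (fun t => f t - f (t / 2) / 2) a b = RInt f (b / 2) b - RInt f (a / 2) a.
Proof.
  intros Ha Hb Hc.
  assert (Hex : forall u v, 0 < u -> 0 < v -> ex_RInt f u v)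
    by (intros; apply ex_RInt_continuous_pos; auto).
  assert (Hex_half : ex_RInt (fun t => f (t / 2)) a b).
  { apply ex_RInt_continuous_pos; auto. intros s Hs. apply continuous_comp_half, Hc. lra. }
  rewrite (RInt_ext _ (fun t => f t - / 2 * f (t / 2)))
    by (intros x _; unfold Rdiv; rewrite (Rmult_comm (f _)); reflexivity).
  rewrite (RInt_minus f (fun t => / 2 * f (t / 2)))
    by (apply Hex || apply (ex_RInt_scal (fun t => f (t / 2))); auto).
  rewrite (RInt_Rmult_l (fun t => f (t / 2))), RInt_comp_half by auto.
  rewrite <- (RInt_Chasles f (a / 2) a (b / 2)), <- (RInt_Chasles f a (b / 2) b)
    by (apply Hex; lra).
  unfold minus, plus, opp; simpl. field.
Qed.

Section Divergence.

Variable w : R -> R.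
Hypothesis w_cont : forall s, 0 <= s -> continuous w s.
Hypothesis w_pos : forall s, 0 <= s -> 0 < w s.

Lemma continuous_inv_w s : 0 <= s -> continuous (fun x => / w x) s.
Proof.
  intros Hs. apply (continuous_Rinv_comp w); [apply w_cont, Hs|].
  specialize (w_pos s Hs). lra.
Qed.

Lemma ex_RInt_inv_w a b : 0 <= a -> 0 <= b -> ex_RInt (fun x => / w x) a b.
Proof. intros Ha Hb. apply (ex_RInt_continuous_ge _ 0); auto. apply continuous_inv_w. Qed.

Lemma ratio_le_RInt_inv t : 0 < t ->
  t / RInt w 0 t <= 4 / t * RInt (fun x => / w x) (t / 2) t.
Proof.
  intros Ht.
  assert (Hex : forall a b, 0 <= a -> 0 <= b -> ex_RInt w a b)
    by (intros; apply (ex_RInt_continuous_ge w 0); auto).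
  set (W := RInt w (t / 2) t). set (I := RInt (fun x => / w x) (t / 2) t).
  assert (HCS : (t - t / 2) ^ 2 <= W * I).
  { apply RInt_sqr_le_RInt_mul_RInt_inv; [lra| |]; intros s Hs;
      apply w_cont || apply w_pos; lra. }
  assert (HW : 0 < W)
    by (apply RInt_gt_0; [lra| |]; intros x Hx; apply w_cont || apply w_pos; lra).
  assert (Hsplit : RInt w 0 t = RInt w 0 (t / 2) + W)
    by (symmetry; apply (RInt_Chasles w); apply Hex; lra).
  assert (0 <= RInt w 0 (t / 2))
    by (apply RInt_ge_0; [lra|apply Hex; lra|intros; apply Rlt_le, w_pos; lra]).
  apply Rle_trans with (t / W).
  - apply Rmult_le_compat_l; [lra|]. apply Rinv_le_contravar; lra.
  - apply (Rmult_le_reg_r (t * W)); [nra|].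
    replace (t / W * (t * W)) with (t ^ 2) by (field; lra).
    replace (4 / t * I * (t * W)) with (4 * (W * I)) by (field; lra). nra.
Qed.

Lemma continuous_ratio t : 0 < t -> continuous (fun t => t / RInt w 0 t) t.
Proof.
  intros Ht. apply (continuous_mult (fun t => t) (fun t => / RInt w 0 t)); [apply continuous_id|].
  apply (continuous_Rinv_comp (fun t => RInt w 0 t)).
  - apply (continuous_RInt_upper _ 0); auto; lra.
  - assert (0 < RInt w 0 t); [|lra].
    apply RInt_gt_0; [exact Ht| |]; intros x Hx; apply w_cont || apply w_pos; lra.
Qed.

Definition averaged_RInt_inv s1 t := RInt (fun x => / w x) s1 t / t.

Lemma continuous_averaged_RInt_inv s1 t : 0 < s1 -> 0 < t ->
  continuous (averaged_RInt_inv s1) t.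
Proof.
  intros Hs1 Ht. apply (continuous_mult (fun t => RInt (fun x => / w x) s1 t) (fun t => / t)).
  - apply (continuous_RInt_upper _ 0); [|lra|lra]. apply continuous_inv_w.
  - apply continuous_Rinv. lra.
Qed.

Lemma RInt_ratio_le_telescope s1 a b : 0 < s1 -> 2 * s1 <= a -> a <= b ->
  RInt (fun t => t / RInt w 0 t) a b <=
  4 * (RInt (averaged_RInt_inv s1) (b / 2) b - RInt (averaged_RInt_inv s1) (a / 2) a).
Proof.
  intros Hs1 Ha Hab. set (G := averaged_RInt_inv s1).
  assert (HG : forall t, 0 < t -> continuous G t)
    by (intros; apply continuous_averaged_RInt_inv; assumption).
  assert (Hex : ex_RInt (fun t => G t - G (t / 2) / 2) a b).
  { apply ex_RInt_continuous_pos; [lra|lra|]. intros t Ht.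
    pose proof (HG t Ht). pose proof (continuous_comp_half G t (HG (t / 2) ltac:(lra))).
    auto_continuous. }
  rewrite <- RInt_sub_half_telescope, <- RInt_Rmult_l by (auto; lra).
  apply RInt_le; [exact Hab|apply ex_RInt_continuous_pos; auto using continuous_ratio; lra| |].
  - apply (ex_RInt_scal (fun t => G t - G (t / 2) / 2)), Hex.
  - intros t Ht.
    apply Rle_trans with (4 / t * RInt (fun x => / w x) (t / 2) t);
      [apply ratio_le_RInt_inv; lra|].
    right. unfold G, averaged_RInt_inv.
    rewrite <- (RInt_Chasles (fun x => / w x) s1 (t / 2) t) by (apply ex_RInt_inv_w; lra).
    unfold plus; simpl. field. lra.
Qed.

(* Bounded [RInt (/ w) s1] would make the telescoped bound, hence every
   [RInt (fun t => t / RInt w 0 t) a T], bounded. *)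
Lemma RInt_inv_unbounded a : 0 < a ->
  is_lim (fun T => RInt (fun t => t / RInt w 0 t) a T) p_infty p_infty ->
  forall s1 B, 0 < s1 -> ~ (forall T, s1 <= T -> RInt (fun x => / w x) s1 T <= B).
Proof.
  intros Ha Hlim s1 B Hs1 HB.
  set (phi := fun t => t / RInt w 0 t). set (G := averaged_RInt_inv s1).
  assert (HG : forall t, 0 < t -> continuous G t)
    by (intros; apply continuous_averaged_RInt_inv; assumption).
  set (A := Rmax a (2 * s1)).
  assert (HA : a <= A /\ 2 * s1 <= A) by (split; [apply Rmax_l|apply Rmax_r]).
  assert (Hbound : forall T, 2 * A <= T -> RInt phi A T <= 4 * B).
  { intros T HT.
    assert (Htel : RInt phi A T <= 4 * (RInt G (T / 2) T - RInt G (A / 2) A))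
      by exact (RInt_ratio_le_telescope s1 A T Hs1 (proj2 HA) ltac:(lra)).
    assert (HA2 : 0 <= RInt G (A / 2) A).
    { apply RInt_ge_0; [lra|apply ex_RInt_continuous_pos; auto; lra|].
      intros x Hx. apply Rdiv_le_0_compat; [|lra].
      apply RInt_ge_0; [lra|apply ex_RInt_inv_w; lra|].
      intros y Hy. apply Rlt_le, Rinv_0_lt_compat, w_pos. lra. }
    assert (HT2 : RInt G (T / 2) T <= RInt (fun _ => B / (T / 2)) (T / 2) T).
    { apply RInt_le; [lra|apply ex_RInt_continuous_pos; auto; lra|apply ex_RInt_const|].
      intros x Hx. unfold G, averaged_RInt_inv.
      assert (0 <= RInt (fun x => / w x) s1 x).
      { apply RInt_ge_0; [lra|apply ex_RInt_inv_w; lra|].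
        intros y Hy. apply Rlt_le, Rinv_0_lt_compat, w_pos. lra. }
      assert (RInt (fun x => / w x) s1 x <= B) by (apply HB; lra).
      apply Rle_trans with (B / x).
      - apply Rmult_le_compat_r; [apply Rlt_le, Rinv_0_lt_compat|]; lra.
      - apply Rmult_le_compat_l; [lra|]. apply Rinv_le_contravar; lra. }
    rewrite RInt_const in HT2. unfold scal in HT2; simpl in HT2; unfold mult in HT2; simpl in HT2.
    replace ((T - T / 2) * (B / (T / 2))) with B in HT2 by (field; lra). lra. }
  destruct (Hlim (fun y => RInt phi a A + 4 * B < y)) as [N HN];
    [exists (RInt phi a A + 4 * B); auto|].
  set (T := Rmax (N + 1) (2 * A)).
  assert (HT : N < T /\ 2 * A <= T)
    by (split; [pose proof (Rmax_l (N + 1) (2 * A)); unfold T; lra|apply Rmax_r]).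
  specialize (HN T (proj1 HT)). simpl in HN.
  change (RInt phi a A + 4 * B < RInt phi a T) in HN.
  rewrite <- (RInt_Chasles phi a A T) in HN
    by (apply ex_RInt_continuous_pos; auto using continuous_ratio; lra).
  specialize (Hbound T (proj2 HT)). unfold plus in HN; simpl in HN. lra.
Qed.

End Divergence.

(* [h1], [h2], [h11], [h22] play the roles of the partial derivatives
   [d_s h], [d_theta h], [d_s^2 h], [d_theta^2 h]; [jet_eq] is the Laplace
   equation [(w h_s)_s + h_theta_theta / w = 0] of [ds^2 + w(s)^2 dtheta^2]. *)
#[local] Set Implicit Arguments.

Record harmonic_jet (w dw : R -> R) (h h1 h2 h11 h22 : R -> R -> R) (s y : R) : Prop := {
  jet_d1 : is_derive (fun x => h x y) s (h1 s y);
  jet_d11 : is_derive (fun x => h1 x y) s (h11 s y);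
  jet_d2 : is_derive (fun t => h s t) y (h2 s y);
  jet_d22 : is_derive (fun t => h2 s t) y (h22 s y);
  jet_cont : continuity_2d_pt h s y;
  jet_cont1 : continuity_2d_pt h1 s y;
  jet_cont2 : continuity_2d_pt h2 s y;
  jet_cont11 : continuity_2d_pt h11 s y;
  jet_cont22 : continuity_2d_pt h22 s y;
  jet_eq : dw s * h1 s y + w s * h11 s y + h22 s y / w s = 0 }.
#[local] Unset Implicit Arguments.

Section Energy.

Variables (w dw : R -> R) (h h1 h2 h11 h22 : R -> R -> R).
Hypothesis w_pos : forall s, 0 < s -> 0 < w s.
Hypothesis w_derive : forall s, 0 < s -> is_derive w s (dw s).
Hypothesis h_jet : forall s y, 0 < s -> harmonic_jet w dw h h1 h2 h11 h22 s y.
Hypothesis h_periodic : forall s t, 0 < s -> h s (t + 2 * PI) = h s t.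

Lemma h2_periodic s : 0 < s -> h2 s (2 * PI) = h2 s 0.
Proof.
  intros Hs.
  rewrite <- (is_derive_unique _ _ _ (jet_d2 (h_jet s 0 Hs))).
  symmetry. apply is_derive_unique, (is_derive_periodic _ (2 * PI)).
  - intro t. apply h_periodic, Hs.
  - rewrite Rplus_0_l. apply (jet_d2 (h_jet s (2 * PI) Hs)).
Qed.

Lemma jet_slices_continuous s y : 0 < s ->
  continuous (fun t => h s t) y /\ continuous (fun t => h1 s t) y /\
  continuous (fun t => h2 s t) y /\ continuous (fun t => h11 s t) y /\
  continuous (fun t => h22 s t) y.
Proof.
  intros Hs. destruct (h_jet s y Hs).
  repeat split; apply continuity_2d_pt_slice; assumption.
Qed.

Definition energy s := RInt (fun t => h s t * h s t) 0 (2 * PI).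
Definition flux s := RInt (fun t => h1 s t * h s t + h s t * h1 s t) 0 (2 * PI).
Definition dflux s := RInt (fun t =>
  (h11 s t * h s t + h1 s t * h1 s t) + (h1 s t * h1 s t + h s t * h11 s t)) 0 (2 * PI).

Lemma energy_derive s : 0 < s -> is_derive energy s (flux s).
Proof.
  intros Hs.
  apply (is_derive_RInt_param_pos (fun z t => h z t * h z t)
           (fun z t => h1 z t * h z t + h z t * h1 z t)); [exact Hs| | |];
    intros u t Hu; destruct (h_jet u t Hu).
  - apply (Derive.is_derive_mult (fun z => h z t) (fun z => h z t)); assumption.
  - apply continuity_2d_pt_plus; apply continuity_2d_pt_mult; assumption.
  - apply continuity_2d_pt_mult; assumption.
Qed.

Lemma flux_derive s : 0 < s -> is_derive flux s (dflux s).
Proof.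
  intros Hs.
  apply (is_derive_RInt_param_pos (fun z t => h1 z t * h z t + h z t * h1 z t)
           (fun z t => (h11 z t * h z t + h1 z t * h1 z t) + (h1 z t * h1 z t + h z t * h11 z t)));
    [exact Hs| | |]; intros u t Hu; destruct (h_jet u t Hu).
  - apply (is_derive_plus (fun z => h1 z t * h z t) (fun z => h z t * h1 z t)).
    + apply (Derive.is_derive_mult (fun z => h1 z t) (fun z => h z t)); assumption.
    + apply (Derive.is_derive_mult (fun z => h z t) (fun z => h1 z t)); assumption.
  - repeat apply continuity_2d_pt_plus; apply continuity_2d_pt_mult; assumption.
  - apply continuity_2d_pt_plus; apply continuity_2d_pt_mult; assumption.
Qed.

Lemma energy_nonneg s : 0 < s -> 0 <= energy s.
Proof.
  intros Hs. apply RInt_ge_0; [pose proof PI_RGT_0; lra| |intros; apply Rle_0_sqr].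
  apply ex_RInt_slice. intros y. destruct (jet_slices_continuous s y Hs) as [Hc _].
  auto_continuous.
Qed.

Lemma RInt_h2_sqr_plus_h_h22 s : 0 < s ->
  RInt (fun t => h2 s t * h2 s t + h s t * h22 s t) 0 (2 * PI) = 0.
Proof.
  intros Hs.
  assert (Hends : minus (h s (2 * PI) * h2 s (2 * PI)) (h s 0 * h2 s 0) = 0).
  { rewrite h2_periodic, <- (Rplus_0_l (2 * PI)), h_periodic by exact Hs.
    unfold minus, plus, opp; simpl. ring. }
  assert (HR : is_RInt (fun t => h2 s t * h2 s t + h s t * h22 s t) 0 (2 * PI)
                 (minus (h s (2 * PI) * h2 s (2 * PI)) (h s 0 * h2 s 0))).
  { apply (is_RInt_derive (fun t => h s t * h2 s t)); intros t _; destruct (h_jet s t Hs).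
    - apply (Derive.is_derive_mult (fun t => h s t) (fun t => h2 s t)); assumption.
    - destruct (jet_slices_continuous s t Hs) as (? & ? & ? & ? & ?). auto_continuous. }
  rewrite Hends in HR. exact (is_RInt_unique _ _ _ _ HR).
Qed.

(* The equation eliminates [h11]; the remaining term [h2^2 + h h22] is the
   theta-derivative of the periodic function [h h2]. *)
Lemma weighted_flux_derive_eq s : 0 < s ->
  dw s * flux s + w s * dflux s =
  RInt (fun t => 2 * (w s * (h1 s t * h1 s t)) + 2 * (h2 s t * h2 s t) / w s) 0 (2 * PI).
Proof.
  intros Hs. pose proof (w_pos s Hs) as Hw.
  assert (Hc := fun y => jet_slices_continuous s y Hs).
  set (qf := fun t => h1 s t * h s t + h s t * h1 s t).
  set (qd := fun t => (h11 s t * h s t + h1 s t * h1 s t) + (h1 s t * h1 s t + h s t * h11 s t)).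
  set (A := fun t => 2 * (w s * (h1 s t * h1 s t)) + 2 * (h2 s t * h2 s t) / w s).
  set (B := fun t => h2 s t * h2 s t + h s t * h22 s t).
  assert (Hex : forall f : R -> R,
    (forall y, continuous (fun t => h s t) y -> continuous (fun t => h1 s t) y ->
    continuous (fun t => h2 s t) y -> continuous (fun t => h11 s t) y ->
    continuous (fun t => h22 s t) y -> continuous f y) -> ex_RInt f 0 (2 * PI)).
  { intros f Hf. apply ex_RInt_slice. intros y. destruct (Hc y) as (? & ? & ? & ? & ?). auto. }
  assert (HexA : ex_RInt A 0 (2 * PI)) by (apply Hex; intros; unfold A; auto_continuous).
  assert (HexB : ex_RInt B 0 (2 * PI)) by (apply Hex; intros; unfold B; auto_continuous).
  assert (Hlhs : RInt (fun t => dw s * qf t + w s * qd t) 0 (2 * PI) =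
                 dw s * flux s + w s * dflux s).
  { assert (ex_RInt qf 0 (2 * PI)) by (apply Hex; intros; unfold qf; auto_continuous).
    assert (ex_RInt qd 0 (2 * PI)) by (apply Hex; intros; unfold qd; auto_continuous).
    rewrite (RInt_plus (fun t => dw s * qf t) (fun t => w s * qd t)).
    - rewrite (RInt_Rmult_l qf), (RInt_Rmult_l qd) by assumption. reflexivity.
    - apply (ex_RInt_scal qf). assumption.
    - apply (ex_RInt_scal qd). assumption. }
  assert (Hrhs : RInt (fun t => A t - 2 / w s * B t) 0 (2 * PI) = RInt A 0 (2 * PI)).
  { assert (HB : RInt B 0 (2 * PI) = 0) by exact (RInt_h2_sqr_plus_h_h22 s Hs).
    rewrite (RInt_minus A (fun t => 2 / w s * B t)), (RInt_Rmult_l B), HB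
      by (exact HexA || exact HexB || apply (ex_RInt_scal B), HexB).
    unfold minus, plus, opp; simpl. ring. }
  assert (Hpt : forall t, dw s * qf t + w s * qd t = A t - 2 / w s * B t).
  { intros t. pose proof (jet_eq (h_jet s t Hs)) as Heq. unfold qf, qd, A, B.
    transitivity (2 * (w s * (h1 s t * h1 s t)) + 2 * (h2 s t * h2 s t) / w s -
      2 / w s * (h2 s t * h2 s t + h s t * h22 s t) +
      2 * h s t * (dw s * h1 s t + w s * h11 s t + h22 s t / w s)); [field; lra|].
    rewrite Heq. ring. }
  rewrite <- Hlhs, (RInt_ext _ _ _ _ (fun t _ => Hpt t)). exact Hrhs.
Qed.

Lemma weighted_flux_derive_nonneg s : 0 < s -> 0 <= dw s * flux s + w s * dflux s.
Proof.
  intros Hs. pose proof (w_pos s Hs). rewrite weighted_flux_derive_eq by exact Hs.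
  apply RInt_ge_0; [pose proof PI_RGT_0; lra| |].
  - apply ex_RInt_slice. intros y. destruct (jet_slices_continuous s y Hs) as (? & ? & ? & ? & ?).
    auto_continuous.
  - intros t _. pose proof (Rle_0_sqr (h1 s t)). pose proof (Rle_0_sqr (h2 s t)). unfold Rsqr in *.
    assert (0 <= h2 s t * h2 s t / w s) by (apply Rdiv_le_0_compat; lra).
    assert (0 <= w s * (h1 s t * h1 s t)) by (apply Rmult_le_pos; lra). lra.
Qed.

Lemma energy_le_of_bound M s : 0 < s -> (forall t, 0 <= t <= 2 * PI -> Rabs (h s t) <= M) ->
  energy s <= 2 * PI * (M * M).
Proof.
  intros Hs HM. pose proof PI_RGT_0.
  apply Rle_trans with (RInt (fun _ => M * M) 0 (2 * PI)).
  - apply RInt_le; [lra| |apply ex_RInt_const|].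
    + apply ex_RInt_slice. intro y. destruct (jet_slices_continuous s y Hs) as [Hc _].
      auto_continuous.
    + intros t Ht. assert (Hb := HM t ltac:(lra)). apply Rabs_le_between in Hb.
      assert (0 <= M) by lra. nra.
  - rewrite RInt_const. right. unfold scal; simpl; unfold mult; simpl. ring.
Qed.

Lemma continuous_inv_w_pos s : 0 < s -> continuous (fun x => / w x) s.
Proof.
  intros Hs. apply (continuous_Rinv_comp w).
  - apply (ex_derive_continuous w). eexists. apply w_derive, Hs.
  - specialize (w_pos s Hs). lra.
Qed.

Lemma weighted_flux_nondecreasing x y : 0 < x -> x <= y -> w x * flux x <= w y * flux y.
Proof.
  intros Hx Hxy.
  apply (nondecreasing_of_derive_nonneg (fun z => w z * flux z)
           (fun z => dw z * flux z + w z * dflux z)); [exact Hxy| |]; intros z Hz.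
  - apply Derive.is_derive_mult; [apply w_derive|apply flux_derive]; lra.
  - apply weighted_flux_derive_nonneg. lra.
Qed.

Lemma flux_nonpos M :
  (forall s t, 0 < s -> Rabs (h s t) <= M) ->
  (forall s1 B, 0 < s1 -> ~ (forall T, s1 <= T -> RInt (fun x => / w x) s1 T <= B)) ->
  forall s, 0 < s -> flux s <= 0.
Proof.
  intros HM Hdiv s1 Hs1.
  destruct (Rle_or_lt (flux s1) 0) as [|Hpos]; [assumption|exfalso].
  pose proof (w_pos s1 Hs1).
  set (c := w s1 * flux s1).
  assert (Hc : 0 < c) by (apply Rmult_lt_0_compat; assumption).
  apply (Hdiv s1 (2 * PI * (M * M) / c) Hs1). intros T HT.
  assert (Hgrowth : energy s1 - c * RInt (fun x => / w x) s1 s1 <=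
                    energy T - c * RInt (fun x => / w x) s1 T).
  { apply (nondecreasing_of_derive_nonneg (fun z => energy z - c * RInt (fun x => / w x) s1 z)
             (fun z => flux z - c * / w z)); [exact HT| |]; intros z Hz.
    - apply (is_derive_minus energy (fun b => c * RInt (fun x => / w x) s1 b));
        [apply energy_derive; lra|].
      apply is_derive_scal, (is_derive_RInt_upper (fun x => / w x) (s1 / 2)); [|lra|lra].
      intros; apply continuous_inv_w_pos; lra.
    - pose proof (w_pos z ltac:(lra)).
      assert (c <= w z * flux z) by exact (weighted_flux_nondecreasing s1 z Hs1 (proj1 Hz)).
      assert (c * / w z <= flux z); [|lra].
      apply (Rmult_le_reg_l (w z)); [assumption|].
      replace (w z * (c * / w z)) with c by (field; lra). lra. }
  rewrite RInt_point in Hgrowth. unfold zero in Hgrowth; simpl in Hgrowth.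
  pose proof (energy_nonneg s1 Hs1).
  pose proof (energy_le_of_bound M T ltac:(lra) (fun t _ => HM T t ltac:(lra))).
  apply (Rmult_le_reg_l c); [exact Hc|].
  replace (c * (2 * PI * (M * M) / c)) with (2 * PI * (M * M)) by (field; lra). lra.
Qed.

Lemma energy_nonincreasing M x y :
  (forall s t, 0 < s -> Rabs (h s t) <= M) ->
  (forall s1 B, 0 < s1 -> ~ (forall T, s1 <= T -> RInt (fun x => / w x) s1 T <= B)) ->
  0 < x -> x <= y -> energy y <= energy x.
Proof.
  intros HM Hdiv Hx Hxy.
  assert (- energy x <= - energy y); [|lra].
  apply (nondecreasing_of_derive_nonneg (fun z => - energy z) (fun z => - flux z));
    [exact Hxy| |]; intros z Hz.
  - apply (is_derive_opp energy), energy_derive. lra.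
  - pose proof (flux_nonpos M HM Hdiv z ltac:(lra)). lra.
Qed.

Lemma energy_small_near_boundary :
  (forall y, 0 <= y <= 2 * PI -> continuity_2d_pt (fun u v => h (Rmax 0 u) v) 0 y) ->
  (forall y, h 0 y = 0) ->
  forall e, 0 < e -> exists d, 0 < d /\ forall r, 0 < r < d -> energy r <= 2 * PI * (e * e).
Proof.
  intros Hb H0 e He.
  destruct (uniform_continuity_2d_1d' _ 0 (2 * PI) 0 Hb (mkposreal e He)) as [d Hd].
  exists d. split; [apply cond_pos|]. intros r Hr.
  apply energy_le_of_bound; [lra|]. intros t Ht.
  pose proof (cond_pos d).
  specialize (Hd t 0 t r Ht ltac:(lra) Ht ltac:(lra) ltac:(rewrite Rminus_eq_0, Rabs_R0; lra)).
  rewrite Rmax_right, Rmax_left, H0, Rminus_0_r in Hd by lra. simpl in Hd. lra.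
Qed.

Lemma energy_eq0 M :
  (forall s t, 0 < s -> Rabs (h s t) <= M) ->
  (forall s1 B, 0 < s1 -> ~ (forall T, s1 <= T -> RInt (fun x => / w x) s1 T <= B)) ->
  (forall y, 0 <= y <= 2 * PI -> continuity_2d_pt (fun u v => h (Rmax 0 u) v) 0 y) ->
  (forall y, h 0 y = 0) ->
  forall s, 0 < s -> energy s = 0.
Proof.
  intros HM Hdiv Hb H0 s Hs. pose proof PI_RGT_0.
  destruct (Rle_lt_or_eq_dec _ _ (energy_nonneg s Hs)) as [Hpos|]; [exfalso|auto].
  set (e := sqrt (energy s / (4 * PI))).
  assert (He : 0 < e) by (apply sqrt_lt_R0, Rdiv_lt_0_compat; lra).
  assert (Hee : e * e = energy s / (4 * PI))
    by (apply sqrt_sqrt, Rlt_le, Rdiv_lt_0_compat; lra).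
  destruct (energy_small_near_boundary Hb H0 e He) as [d [Hd Hsmall]].
  set (r := Rmin s (d / 2)).
  assert (Hr : 0 < r) by (apply Rmin_glb_lt; lra).
  assert (Hrs : r <= s) by apply Rmin_l.
  assert (Hrd : r < d) by (pose proof (Rmin_r s (d / 2)); unfold r; lra).
  pose proof (energy_nonincreasing M r s HM Hdiv Hr Hrs).
  pose proof (Hsmall r (conj Hr Hrd)) as Hsr. rewrite Hee in Hsr.
  replace (2 * PI * (energy s / (4 * PI))) with (energy s / 2) in Hsr by (field; lra).
  lra.
Qed.

Theorem harmonic_jet_vanishes M :
  (forall s t, 0 < s -> Rabs (h s t) <= M) ->
  (forall s1 B, 0 < s1 -> ~ (forall T, s1 <= T -> RInt (fun x => / w x) s1 T <= B)) ->
  (forall y, 0 <= y <= 2 * PI -> continuity_2d_pt (fun u v => h (Rmax 0 u) v) 0 y) ->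
  (forall y, h 0 y = 0) ->
  forall s t, 0 < s -> h s t = 0.
Proof.
  intros HM Hdiv Hb H0 s t Hs. pose proof PI_RGT_0.
  apply (periodic_eq0 (fun t => h s t) (2 * PI)); [lra|intro; apply h_periodic, Hs|].
  intros y Hy.
  assert (Hsq : h s y * h s y = 0).
  { apply (RInt_eq0_continuous_nonneg (fun t => h s t * h s t) 0 (2 * PI));
      [lra|exact Hy| |intro; apply Rle_0_sqr|exact (energy_eq0 M HM Hdiv Hb H0 s Hs)].
    intro x. destruct (jet_slices_continuous s x Hs) as [Hc _]. auto_continuous. }
  destruct (Rmult_integral _ _ Hsq); assumption.
Qed.

End Energy.

Lemma wk_derivable_pos k g1 g2 : (k = (-1)%Z \/ k = 0%Z \/ k = 1%Z) -> profile_curve k g1 g2 ->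
  (forall s, 0 <= s -> ex_derive (wk k g1 g2) s) /\ (forall s, 0 <= s -> 0 < wk k g1 g2 s).
Proof.
  intros hk (Hg1 & Hg2 & Hp1 & Hp2 & _).
  assert (d1 : forall x, ex_derive g1 x) by (intro x; exact (Hg1 1%nat x)).
  assert (d2 : forall x, ex_derive g2 x) by (intro x; exact (Hg2 1%nat x)).
  unfold wk. destruct hk as [->|[-> | ->]]; simpl; split; intros s Hs.
  - specialize (Hp2 eq_refl s Hs). auto_derive. repeat split; auto. lra.
  - specialize (Hp2 eq_refl s Hs). apply Rdiv_lt_0_compat; auto.
  - apply d1.
  - auto.
  - auto_derive. repeat split; auto. nra.
  - specialize (Hp1 s Hs). apply Rdiv_lt_0_compat; nra.
Qed.

Lemma C2_harmonic_jet (w : R -> R) (u : R -> R -> R) (s y : R) : ex_derive w s -> w s <> 0 ->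
  C2_at u s y -> lap w u s y = 0 ->
  harmonic_jet w (Derive w) u (D1 u) (D2 u) (D1 (D1 u)) (D2 (D2 u)) s y.
Proof.
  intros Hw Hw0 [Hd (c0 & c1 & c2 & c11 & _ & _ & c22)] Hlap.
  destruct (Hd u (or_introl eq_refl)) as [d1 d2].
  destruct (Hd (D1 u) (or_intror (or_introl eq_refl))) as [d11 _].
  destruct (Hd (D2 u) (or_intror (or_intror eq_refl))) as [_ d22].
  split; try (apply Derive_correct; assumption);
    try (apply continuity_2d_pt_filterlim; assumption).
  assert (Hprod : Derive (fun x => w x * D1 u x y) s =
                  Derive w s * D1 u s y + w s * D1 (D1 u) s y)
    by exact (is_derive_unique _ _ _ (Derive.is_derive_mult _ _ _ _ _
                (Derive_correct _ _ Hw) (Derive_correct _ _ d11))).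
  unfold lap in Hlap. rewrite Hprod in Hlap.
  apply (Rmult_eq_reg_l (/ w s)); [|apply Rinv_neq_0_compat, Hw0].
  rewrite Rmult_0_r, <- Hlap. field. exact Hw0.
Qed.

Lemma harmonic_jet_minus (w dw : R -> R) (u u1 u2 u11 u22 v v1 v2 v11 v22 : R -> R -> R) s y :
  w s <> 0 ->
  harmonic_jet w dw u u1 u2 u11 u22 s y -> harmonic_jet w dw v v1 v2 v11 v22 s y ->
  harmonic_jet w dw (fun a b => u a b - v a b) (fun a b => u1 a b - v1 a b)
    (fun a b => u2 a b - v2 a b) (fun a b => u11 a b - v11 a b) (fun a b => u22 a b - v22 a b) s y.
Proof.
  intros Hw [] []. split;
    try (apply (is_derive_minus (V := R_NormedModule)); assumption);
    try (apply continuity_2d_pt_minus; assumption).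
  transitivity ((dw s * u1 s y + w s * u11 s y + u22 s y / w s) -
                (dw s * v1 s y + w s * v11 s y + v22 s y / w s)); [field; exact Hw|lra].
Qed.

Lemma continuity_2d_pt_boundary (u : R -> R -> R) y :
  filterlim (fun p : R * R => u (fst p) (snd p))
    (within (fun p : R * R => 0 <= fst p) (locally (0, y))) (locally (u 0 y)) ->
  continuity_2d_pt (fun a b => u (Rmax 0 a) b) 0 y.
Proof.
  intros H eps.
  destruct (H (fun z => Rabs (z - u 0 y) < eps)) as [d Hd]; [now exists eps|].
  exists d. intros a b Ha Hb. rewrite (Rmax_left 0 0) by lra.
  apply (Hd (Rmax 0 a, b)); [split; [|exact Hb]|apply Rmax_l].
  simpl. unfold ball; simpl; unfold AbsRing_ball, abs, minus, plus, opp; simpl.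
  rewrite Rminus_0_r in Ha. apply Rabs_lt_between in Ha. apply Rabs_lt_between.
  pose proof (cond_pos d). destruct (Rle_dec 0 a);
    [rewrite Rmax_right by lra|rewrite Rmax_left by lra]; lra.
Qed.

Lemma parabolic_end_of_RInt_inv_unbounded (w : R -> R) :
  (forall s, 0 <= s -> ex_derive w s) -> (forall s, 0 <= s -> 0 < w s) ->
  (forall s1 B, 0 < s1 -> ~ (forall T, s1 <= T -> RInt (fun x => / w x) s1 T <= B)) ->
  parabolic_end w.
Proof.
  intros Wd Wp Hdiv u v [Pu [[Mu HMu] [Bu Hu]]] [Pv [[Mv HMv] [Bv Hv]]] H0 s th Hs.
  destruct (Rle_lt_or_eq_dec _ _ Hs) as [Hs'|<-]; [|apply H0].
  apply Rminus_diag_uniq.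
  refine (harmonic_jet_vanishes w (Derive w) (fun a b => u a b - v a b)
    (fun a b => D1 u a b - D1 v a b) (fun a b => D2 u a b - D2 v a b)
    (fun a b => D1 (D1 u) a b - D1 (D1 v) a b) (fun a b => D2 (D2 u) a b - D2 (D2 v) a b)
    _ _ _ _ (Mu + Mv) _ Hdiv _ _ s th Hs').
  - intros s0 Hs0. apply Wp. lra.
  - intros s0 Hs0. apply Derive_correct, Wd. lra.
  - intros s0 y Hs0. assert (Hw0 : w s0 <> 0) by (pose proof (Wp s0 ltac:(lra)); lra).
    destruct (Hu s0 y Hs0), (Hv s0 y Hs0).
    apply harmonic_jet_minus; [|apply C2_harmonic_jet..]; auto; apply Wd; lra.
  - intros s0 t Hs0. simpl. rewrite Pu, Pv by lra. reflexivity.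
  - intros s0 t Hs0. unfold Rminus. eapply Rle_trans; [apply Rabs_triang|].
    rewrite Rabs_Ropp. pose proof (HMu s0 t ltac:(lra)). pose proof (HMv s0 t ltac:(lra)). lra.
  - intros y _.
    apply (continuity_2d_pt_minus (fun a b => u (Rmax 0 a) b) (fun a b => v (Rmax 0 a) b));
      apply continuity_2d_pt_boundary; [apply Bu|apply Bv]; lra.
  - intros y. simpl. rewrite H0. ring.
Qed.

Theorem corollary2p17 (k : Z) (g1 g2 : R -> R)
  (hk : k = (-1)%Z \/ k = 0%Z \/ k = 1%Z)
  (hg : profile_curve k g1 g2)
  (hint : exists a, 0 < a /\
     is_lim (fun T => RInt (fun t => t / RInt (wk k g1 g2) 0 t) a T)
            p_infty p_infty) :
  parabolic_end (wk k g1 g2).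
Proof.
  destruct hint as [a [Ha Hlim]].
  destruct (wk_derivable_pos k g1 g2 hk hg) as [Wd Wp].
  assert (Wc : forall s, 0 <= s -> continuous (wk k g1 g2) s)
    by (intros s Hs; apply (ex_derive_continuous (wk k g1 g2)), Wd, Hs).
  apply parabolic_end_of_RInt_inv_unbounded; [exact Wd|exact Wp|].
  exact (RInt_inv_unbounded (wk k g1 g2) Wc Wp a Ha Hlim).
Qed.
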